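(* Let $\Gamma\subseteq\mathit{Aff}(2,\mathbb{H})$ be a subgroup acting freely on $\mathbb{H}^2$. Then $\Gamma$ is conjugate in $\mathit{Aff}(2,\mathbb{H})$ to a subgroup of $G_2$.
   Context: $\mathit{Aff}(2,\mathbb{H})$ is identified with invertible $3\times3$ quaternionic matrices $\begin{pmatrix} a&b&r\\ c&d&s\\ 0&0&1\end{pmatrix}$ acting on $(x,y)\in\mathbb{H}^2$ by $(x,y)\mapsto(ax+by+r,cx+dy+s)$. $G_2=\left\{\begin{pmatrix} 1&b&r\\ 0&d&s\\ 0&0&1\end{pmatrix}: b,r,s,d\in\mathbb{H}, d\neq0\right\}$. *)

From HB Require Import structures.
From mathcomp Require Import all_boot all_order all_algebra.
From mathcomp Require Import reals.
Set Implicit Arguments. Unset Strict Implicit. Unset Printing Implicit Defensive.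
Import Order.TTheory GRing.Theory Num.Theory.
Local Open Scope ring_scope.

Section Quaternions.
Variable R : realType.

Record quat := Quat { qr : R; qi : R; qj : R; qk : R }.

Definition q0 : quat := Quat 0 0 0 0.
Definition q1 : quat := Quat 1 0 0 0.

Definition qadd (p q : quat) : quat :=
  Quat (qr p + qr q) (qi p + qi q) (qj p + qj q) (qk p + qk q).

(** Hamilton product (i^2 = j^2 = k^2 = ijk = -1). *)
Definition qmul (p q : quat) : quat :=
  Quat (qr p * qr q - qi p * qi q - qj p * qj q - qk p * qk q)
       (qr p * qi q + qi p * qr q + qj p * qk q - qk p * qj q)
       (qr p * qj q - qi p * qk q + qj p * qr q + qk p * qi q)
       (qr p * qk q + qi p * qj q - qj p * qi q + qk p * qr q).

(** An element of Aff(2,H) written as the quaternionic matrix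
    [[a, b, r], [c, d, s], [0, 0, 1]]. *)
Record aff := Aff { aa : quat; ab : quat; ac : quat; ad : quat;
                    ar : quat; as' : quat }.

Definition act (g : aff) (p : quat * quat) : quat * quat :=
  (qadd (qadd (qmul (aa g) p.1) (qmul (ab g) p.2)) (ar g),
   qadd (qadd (qmul (ac g) p.1) (qmul (ad g) p.2)) (as' g)).

(** Matrix product g * h (corresponds to act g \o act h). *)
Definition acomp (g h : aff) : aff :=
  Aff (qadd (qmul (aa g) (aa h)) (qmul (ab g) (ac h)))
      (qadd (qmul (aa g) (ab h)) (qmul (ab g) (ad h)))
      (qadd (qmul (ac g) (aa h)) (qmul (ad g) (ac h)))
      (qadd (qmul (ac g) (ab h)) (qmul (ad g) (ad h)))
      (qadd (qadd (qmul (aa g) (ar h)) (qmul (ab g) (as' h))) (ar g))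
      (qadd (qadd (qmul (ac g) (ar h)) (qmul (ad g) (as' h))) (as' g)).

Definition aid : aff := Aff q1 q0 q0 q1 q0 q0.

Definition in_Aff (g : aff) : Prop :=
  exists h, acomp g h = aid /\ acomp h g = aid.

Definition is_Aff_subgroup (Gamma : aff -> Prop) : Prop :=
  [/\ forall g, Gamma g -> in_Aff g,
      Gamma aid,
      forall g h, Gamma g -> Gamma h -> Gamma (acomp g h) &
      forall g, Gamma g ->
        exists h, [/\ Gamma h, acomp g h = aid & acomp h g = aid]].

Definition acts_freely (Gamma : aff -> Prop) : Prop :=
  forall g, Gamma g -> forall p, act g p = p -> g = aid.

Definition in_G2 (g : aff) : Prop :=
  [/\ aa g = q1, ac g = q0 & ad g <> q0].

End Quaternions.

From HB Require Import structures.
From mathcomp Require Import all_boot all_order all_algebra.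
From mathcomp Require Import reals.
From mathcomp Require Import ring lra.
From Stdlib Require Import Classical.
Set Implicit Arguments. Unset Strict Implicit. Unset Printing Implicit Defensive.
Import Order.TTheory GRing.Theory Num.Theory.
Local Open Scope ring_scope.

(* If g in Gamma has linear part A and translation t, a solution of
   (A - 1) x = - t is a fixed point of g; so for g <> 1 the matrix A - 1 is
   not onto, and over the division ring H it then has a nonzero kernel.  If
   some g0 in Gamma is not a translation, conjugating so that its fixed
   vector becomes e1 and then, when d <> 1, clearing its upper right entry
   puts A_g0 in the form [[1, b], [0, d]] with b = 0, d <> 1 or d = 1, b <> 0.
   Every h in Gamma, say A_h = [[a, b'], [c, e]], then has c = 0: for c <> 0
   non-surjectivity of A_h - 1 is the vanishing of the Schur complement
   b' - (a - 1) c^-1 (e - 1), and the same identity for g0 h is contradictory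
   (in the diagonal case it forces a = 1, b' = 0, and then h g0 and g0 h agree
   at a point, hence are equal).  An upper triangular A_h - 1 has a zero
   diagonal entry, and a <> 1 for one element forces e = 1 for all of them;
   g0 is then unipotent and again h g0 = g0 h, which forces a = 1.  So every
   linear part fixes e1. *)

Section DivisionRing.
Variable D : unitRingType.
Hypothesis unitDE : forall x : D, (x \is a GRing.unit) = (x != 0).

Lemma mulD_eq0 (x y : D) : (x * y == 0) = (x == 0) || (y == 0).
Proof.
apply/eqP/idP => [xy0|/orP[]/eqP->]; rewrite ?mul0r ?mulr0 //.
apply: contraT; rewrite negb_or -!unitDE => /andP[ux uy].
by have := unitrMl x uy; rewrite ux xy0 unitDE eqxx.
Qed.

Definition mx2_onto (p q r s : D) := forall y1 y2 : D,
  exists x1 x2, p * x1 + q * x2 = y1 /\ r * x1 + s * x2 = y2.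

Lemma mx2_onto_triu (p q s : D) : p != 0 -> s != 0 -> mx2_onto p q 0 s.
Proof.
rewrite -!unitDE => up us y1 y2.
exists (p^-1 * (y1 - q * (s^-1 * y2))), (s^-1 * y2).
by rewrite mul0r add0r !mulVKr // subrK.
Qed.

Lemma mx2_onto_schur (p q r s : D) :
  r != 0 -> q - p * r^-1 * s != 0 -> mx2_onto p q r s.
Proof.
rewrite -!unitDE => ur uS y1 y2.
set S := q - p * r^-1 * s; set x2 := S^-1 * (y1 - p * r^-1 * y2).
have Sx2 : S * x2 = y1 - p * r^-1 * y2 by rewrite mulVKr.
exists (r^-1 * (y2 - s * x2)), x2; split; last by rewrite mulVKr // subrK.
clearbody x2.
by rewrite !mulrBr !mulrA -addrA [- _ + _]addrC -mulrBl Sx2 addrC subrK.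
Qed.

Lemma mx2_ker_or_onto (p q r s : D) :
  (exists x1 x2, (x1 != 0 \/ x2 != 0) /\ p * x1 + q * x2 = 0 /\ r * x1 + s * x2 = 0)
  \/ mx2_onto p q r s.
Proof.
have nz1 : (1 : D) != 0 := oner_neq0 D.
have [r0|nr] := eqVneq r 0.
  have [p0|np] := eqVneq p 0.
    by left; exists 1, 0; rewrite p0 r0 !mulr0 !mul0r !addr0; split; [left|].
  have [s0|ns] := eqVneq s 0; last by right; rewrite r0; apply: mx2_onto_triu.
  left; exists (- (p^-1 * q)), 1; split; first by right.
  by rewrite r0 s0 !mul0r addr0 mulr1 mulrN mulVKr ?unitDE // addNr.
have [S0|nS] := eqVneq (q - p * r^-1 * s) 0; last by right; apply: mx2_onto_schur.
left; exists (- (r^-1 * s)), 1; split; first by right.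
by rewrite !mulr1 !mulrN mulVKr ?unitDE // addNr mulrA addrC.
Qed.

End DivisionRing.

Section Quaternions.
Variable R : realType.
Local Notation H := (quat R).

Lemma quat_ext (p q : H) :
  qr p = qr q -> qi p = qi q -> qj p = qj q -> qk p = qk q -> p = q.
Proof. by case: p => ????; case: q => ???? /= -> -> -> ->. Qed.

Definition quat_tuple (q : H) := (qr q, qi q, qj q, qk q).
Definition tuple_quat (t : R * R * R * R) : H :=
  let: (a, b, c, d) := t in Quat a b c d.
Lemma quat_tupleK : cancel quat_tuple tuple_quat. Proof. by case. Qed.
HB.instance Definition _ := Choice.copy H (can_type quat_tupleK).

Definition qopp (p : H) : H := Quat (- qr p) (- qi p) (- qj p) (- qk p).

Lemma qaddA : associative (@qadd R).
Proof. by move=> ???; apply: quat_ext => /=; ring. Qed.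
Lemma qaddC : commutative (@qadd R).
Proof. by move=> ??; apply: quat_ext => /=; ring. Qed.
Lemma qadd0 : left_id (q0 R) (@qadd R).
Proof. by move=> ?; apply: quat_ext => /=; ring. Qed.
Lemma qaddN : left_inverse (q0 R) qopp (@qadd R).
Proof. by move=> ?; apply: quat_ext => /=; ring. Qed.
Lemma qmulA : associative (@qmul R).
Proof. by move=> ???; apply: quat_ext => /=; ring. Qed.
Lemma qmul1 : left_id (q1 R) (@qmul R).
Proof. by move=> ?; apply: quat_ext => /=; ring. Qed.
Lemma qmulr1 : right_id (q1 R) (@qmul R).
Proof. by move=> ?; apply: quat_ext => /=; ring. Qed.
Lemma qmulDl : left_distributive (@qmul R) (@qadd R).
Proof. by move=> ???; apply: quat_ext => /=; ring. Qed.
Lemma qmulDr : right_distributive (@qmul R) (@qadd R).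
Proof. by move=> ???; apply: quat_ext => /=; ring. Qed.
Lemma q1_neq0 : q1 R != q0 R.
Proof. by apply/eqP => -[] /eqP; rewrite oner_eq0. Qed.

HB.instance Definition _ := GRing.isNzRing.Build H qaddA qaddC qadd0 qaddN
  qmulA qmul1 qmulr1 qmulDl qmulDr q1_neq0.

Lemma qaddE (x y : H) : x + y = qadd x y. Proof. by []. Qed.
Lemma qmulE (x y : H) : x * y = qmul x y. Proof. by []. Qed.
Lemma qoppE (x : H) : - x = qopp x. Proof. by []. Qed.
Lemma q0E : (0 : H) = q0 R. Proof. by []. Qed.
Lemma q1E : (1 : H) = q1 R. Proof. by []. Qed.
Definition quatE := (qaddE, qmulE, qoppE, q0E, q1E).

Definition qnorm2 (q : H) := qr q ^+ 2 + qi q ^+ 2 + qj q ^+ 2 + qk q ^+ 2.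

(* Since [x / 0 = 0], [qinv 0 = 0]: a unit ring must invert non-units to themselves. *)
Definition qinv (q : H) : H :=
  Quat (qr q / qnorm2 q) (- qi q / qnorm2 q) (- qj q / qnorm2 q) (- qk q / qnorm2 q).

Lemma qnorm2_eq0 q : (qnorm2 q == 0) = (q == 0).
Proof.
apply/idP/eqP => [/eqP q0|->]; last by rewrite /qnorm2 /= expr0n !addr0.
have := sqr_ge0 (qr q); have := sqr_ge0 (qi q); have := sqr_ge0 (qj q).
have := sqr_ge0 (qk q); rewrite /qnorm2 in q0 => *.
by apply: quat_ext => /=; apply/eqP; rewrite -sqrf_eq0; apply/eqP; lra.
Qed.

Definition qunit := [pred q : H | q != 0].

Lemma qmulV : {in qunit, left_inverse 1 qinv *%R}.
Proof.
move=> q; rewrite inE -qnorm2_eq0 => nz.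
by apply: quat_ext; rewrite /= /qnorm2 in nz *; field.
Qed.
Lemma qmulrV : {in qunit, right_inverse 1 qinv *%R}.
Proof.
move=> q; rewrite inE -qnorm2_eq0 => nz.
by apply: quat_ext; rewrite /= /qnorm2 in nz *; field.
Qed.
Lemma qunitP (x y : H) : y * x = 1 /\ x * y = 1 -> qunit x.
Proof.
by case=> + _; rewrite inE; apply: contra_eqN => /eqP->; rewrite mulr0 eq_sym oner_eq0.
Qed.
Lemma qinv_out : {in [predC qunit], qinv =1 id}.
Proof. by move=> q; rewrite !inE negbK => /eqP->; apply: quat_ext; rewrite /= !(oppr0, mul0r). Qed.

HB.instance Definition _ := GRing.NzRing_hasMulInverse.Build H qmulV qmulrV qunitP qinv_out.

Lemma qunitE (x : H) : (x \is a GRing.unit) = (x != 0).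
Proof. by []. Qed.

End Quaternions.

Ltac qring := apply: quat_ext; rewrite ?quatE /=; ring.

Section AffineMaps.
Variable R : realType.
Local Notation H := (quat R).
Local Notation Af := (aff R).
Local Notation aid := (aid R).

Lemma acompE (g h : Af) : acomp g h =
  Aff (aa g * aa h + ab g * ac h) (aa g * ab h + ab g * ad h)
      (ac g * aa h + ad g * ac h) (ac g * ab h + ad g * ad h)
      (aa g * ar h + ab g * as' h + ar g) (ac g * ar h + ad g * as' h + as' g).
Proof. by []. Qed.

Lemma actE (g : Af) x y :
  act g (x, y) = (aa g * x + ab g * y + ar g, ac g * x + ad g * y + as' g).
Proof. by []. Qed.

Lemma acompA (g h k : Af) : acomp g (acomp h k) = acomp (acomp g h) k.
Proof. by rewrite !acompE /=; congr Aff; qring. Qed.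
Lemma acomp1g (g : Af) : acomp aid g = g.
Proof. by case: g => * /=; rewrite acompE /=; congr Aff; qring. Qed.
Lemma acompg1 (g : Af) : acomp g aid = g.
Proof. by case: g => * /=; rewrite acompE /=; congr Aff; qring. Qed.
Lemma actM (g h : Af) p : act (acomp g h) p = act g (act h p).
Proof. by case: p => x y; rewrite !actE acompE /=; congr pair; qring. Qed.
Lemma act1 p : act aid p = p.
Proof. by case: p => x y; rewrite actE /=; congr pair; qring. Qed.

Lemma ad_neq0 (g : Af) : in_Aff g -> ac g = 0 -> ad g != 0.
Proof.
case=> h [/(congr1 (@ad R)) + _]; rewrite acompE /= => + c0; rewrite c0 mul0r add0r.
by apply: contra_eqN => /eqP->; rewrite mul0r eq_sym oner_eq0.
Qed.

Section FreeSubgroup.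
Variable Gamma : Af -> Prop.
Hypothesis Gamma_sub : is_Aff_subgroup Gamma.
Hypothesis Gamma_free : acts_freely Gamma.

Lemma Gamma_mul g h : Gamma g -> Gamma h -> Gamma (acomp g h).
Proof. by case: Gamma_sub => _ _ + _; apply. Qed.

Lemma free_act_inj g1 g2 p : Gamma g1 -> Gamma g2 -> act g1 p = act g2 p -> g1 = g2.
Proof.
case: Gamma_sub => _ _ _ Ginv G1 G2 E; have [g2' [G2' E21 E12]] := Ginv g2 G2.
have g1g2' : acomp g1 g2' = aid.
  apply: (Gamma_free (Gamma_mul G1 G2') (p := act g2 p)).
  by rewrite actM -(actM g2' g2) E12 act1 E.
by rewrite -[g1]acompg1 -E12 acompA g1g2' acomp1g.
Qed.

Lemma free_onto_id g : Gamma g ->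
  mx2_onto (aa g - 1) (ab g) (ac g) (ad g - 1) -> g = aid.
Proof.
move=> Gg /(_ (- ar g) (- as' g)) [x1 [x2 [E1 E2]]]; apply: (Gamma_free Gg (p := (x1, x2))).
rewrite actE; congr pair.
  have -> : aa g * x1 + ab g * x2 + ar g = x1 + ((aa g - 1) * x1 + ab g * x2 + ar g) by qring.
  by rewrite E1 addNr addr0.
have -> : ac g * x1 + ad g * x2 + as' g = x2 + (ac g * x1 + (ad g - 1) * x2 + as' g) by qring.
by rewrite E2 addNr addr0.
Qed.

Lemma free_schur g : Gamma g -> ac g != 0 -> ab g = (aa g - 1) / ac g * (ad g - 1).
Proof.
move=> Gg nc; apply/eqP; rewrite -subr_eq0; apply: contraT => nS.
have gid := free_onto_id Gg (mx2_onto_schur (@qunitE R) nc nS).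
by move: nc; rewrite gid eqxx.
Qed.

Lemma free_triu g : Gamma g -> ac g = 0 -> aa g = 1 \/ ad g = 1.
Proof.
move=> Gg c0; have [|na] := eqVneq (aa g) 1; [by left | right].
apply/eqP; apply: contraT => nd.
have onto : mx2_onto (aa g - 1) (ab g) (ac g) (ad g - 1).
  by rewrite c0; apply: (mx2_onto_triu (@qunitE R)); rewrite subr_eq0.
by move: na; rewrite (free_onto_id Gg onto) eqxx.
Qed.

Lemma Gamma_in_Aff g : Gamma g -> in_Aff g.
Proof. by case: Gamma_sub => + _ _ _; apply. Qed.

Lemma free_ac_eq_of_row1 g1 g2 : Gamma g1 -> Gamma g2 ->
  aa g1 = aa g2 -> ar g1 = ar g2 -> ac g1 = ac g2.
Proof.
move=> G1 G2 Ea Er; apply/eqP; apply: contraT => nc.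
pose x := (ac g1 - ac g2)^-1 * (as' g2 - as' g1).
have Hx : (ac g1 - ac g2) * x = as' g2 - as' g1 by rewrite mulVKr // qunitE subr_eq0.
clearbody x; have E : act g1 (x, 0) = act g2 (x, 0).
  rewrite !actE !mulr0 !addr0 Ea Er; congr pair.
  have -> : ac g1 * x + as' g1 =
      ac g2 * x + as' g2 + ((ac g1 - ac g2) * x - (as' g2 - as' g1)) by qring.
  by rewrite Hx subrr addr0.
by move: nc; rewrite (free_act_inj G1 G2 E) eqxx.
Qed.

Lemma free_ab_eq_of_row2 g1 g2 : Gamma g1 -> Gamma g2 ->
  ad g1 = ad g2 -> as' g1 = as' g2 -> ab g1 = ab g2.
Proof.
move=> G1 G2 Ed Es; apply/eqP; apply: contraT => nb.
pose x := (ab g1 - ab g2)^-1 * (ar g2 - ar g1).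
have Hx : (ab g1 - ab g2) * x = ar g2 - ar g1 by rewrite mulVKr // qunitE subr_eq0.
clearbody x; have E : act g1 (0, x) = act g2 (0, x).
  rewrite !actE !mulr0 !add0r Ed Es; congr pair.
  have -> : ab g1 * x + ar g1 =
      ab g2 * x + ar g2 + ((ab g1 - ab g2) * x - (ar g2 - ar g1)) by qring.
  by rewrite Hx subrr addr0.
by move: nb; rewrite (free_act_inj G1 G2 E) eqxx.
Qed.

Lemma ac_eq0_of_unipotent b t1 t2 :
  b != 0 -> Gamma (Aff 1 b 0 1 t1 t2) -> forall h, Gamma h -> ac h = 0.
Proof.
move=> nb G0 [a be c e r s] Gh /=; apply/eqP; apply: contraT => nc.
have /= S := free_schur Gh nc.
have := free_schur (Gamma_mul G0 Gh).
have -> : acomp (Aff 1 b 0 1 t1 t2) (Aff a be c e r s) =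
    Aff (a + b * c) (be + b * e) c e (r + b * s + t1) (s + t2).
  by rewrite acompE; congr Aff; qring.
move=> /= /(_ nc); rewrite addrAC mulrDl mulrK ?qunitE // mulrDl -S => /addrI.
by rewrite mulrBr mulr1 => /eqP; rewrite -subr_eq0 opprB addrC subrK (negbTE nb).
Qed.

Lemma row1_eq_of_diag d t1 t2 h : d != 1 -> Gamma (Aff 1 0 0 d t1 t2) ->
  Gamma h -> ac h != 0 -> aa h = 1 /\ ab h = 0.
Proof.
move: h => [a be c e r s] nd1 G0 Gh /= nc.
have nd0 : d != 0 := ad_neq0 (Gamma_in_Aff G0) erefl.
have /= S := free_schur Gh nc.
have := free_schur (Gamma_mul G0 Gh).
have -> : acomp (Aff 1 0 0 d t1 t2) (Aff a be c e r s) =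
    Aff a be (d * c) (d * e) (r + t1) (d * s + t2).
  by rewrite acompE; congr Aff; qring.
have ndc : d * c != 0 by rewrite (mulD_eq0 (@qunitE R)) negb_or nd0.
move=> /= /(_ ndc).
rewrite invrM ?qunitE // mulrA -[_ / c / d * _]mulrA mulrBr mulKr ?qunitE // mulr1.
move=> /eqP; rewrite S -subr_eq0 -mulrBr opprB [_ + (_ - e)]addrC subrKA.
rewrite !(mulD_eq0 (@qunitE R)) invr_eq0 !subr_eq0 invr_eq1 (negbTE nc) (negbTE nd1).
by rewrite !orbF => /eqP a1; rewrite a1 subrr !mul0r.
Qed.

Lemma ac_eq0_of_diag d t1 t2 :
  d != 1 -> Gamma (Aff 1 0 0 d t1 t2) -> forall h, Gamma h -> ac h = 0.
Proof.
move=> nd1 G0 h Gh; apply/eqP; apply: contraT => nc.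
have [] := row1_eq_of_diag nd1 G0 Gh nc.
move: h Gh nc => [a be c e r s] Gh /= nc a1 b0; rewrite {}a1 {}b0 in Gh.
have := free_ac_eq_of_row1 (Gamma_mul G0 Gh) (Gamma_mul Gh G0).
rewrite !acompE /= !(mul0r, mulr0, mul1r, mulr1, add0r, addr0).
rewrite addrC => /(_ erefl erefl) /eqP; rewrite -subr_eq0 -{2}[c]mul1r -mulrBl.
by rewrite (mulD_eq0 (@qunitE R)) subr_eq0 (negbTE nd1) (negbTE nc).
Qed.

Lemma ad_eq1_of_aa_neq1 : (forall h, Gamma h -> ac h = 0) ->
  forall h1 h2, Gamma h1 -> Gamma h2 -> aa h1 != 1 -> ad h2 = 1.
Proof.
move=> ac0 h1 h2 G1 G2 na1; apply/eqP; apply: contraT => nd2.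
have G12 := Gamma_mul G1 G2.
have [a1|d1] := free_triu G1 (ac0 _ G1); first by rewrite a1 eqxx in na1.
have [a2|d2] := free_triu G2 (ac0 _ G2); last by rewrite d2 eqxx in nd2.
have := free_triu G12 (ac0 _ G12); rewrite acompE /= a2 d1 (ac0 _ G1) (ac0 _ G2).
by rewrite mulr1 mulr0 addr0 mul0r add0r mul1r => -[] /eqP; rewrite ?(negbTE na1) ?(negbTE nd2).
Qed.

Lemma aa_eq1_of_unipotent b t1 t2 h : b != 0 -> Gamma (Aff 1 b 0 1 t1 t2) ->
  Gamma h -> ac h = 0 -> ad h = 1 -> aa h = 1.
Proof.
move: h => [a be c e r s] nb G0 Gh /= c0 e1; rewrite {}c0 {}e1 in Gh.
apply/eqP; apply: contraT => na.
have := free_ab_eq_of_row2 (Gamma_mul Gh G0) (Gamma_mul G0 Gh).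
rewrite !acompE /= !(mul0r, mulr0, mul1r, mulr1, add0r, addr0).
rewrite [t2 + s]addrC [be + b]addrC => /(_ erefl erefl) /addIr /eqP.
rewrite -subr_eq0 -{2}[b]mul1r -mulrBl (mulD_eq0 (@qunitE R)) subr_eq0.
by rewrite (negbTE na) (negbTE nb).
Qed.

Lemma Gamma_in_G2 b d t1 t2 : Gamma (Aff 1 b 0 d t1 t2) ->
  (b = 0 /\ d != 1) \/ (d = 1 /\ b != 0) -> forall h, Gamma h -> in_G2 h.
Proof.
move=> G0 nf.
have ac0 : forall h, Gamma h -> ac h = 0.
  case: nf => [[b0 nd]|[d1 nb]]; first by rewrite b0 in G0; apply: ac_eq0_of_diag G0.
  by rewrite d1 in G0; apply: ac_eq0_of_unipotent G0.
move=> h Gh; have c0 := ac0 h Gh; split=> //; last exact/eqP/(ad_neq0 (Gamma_in_Aff Gh) c0).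
apply/eqP; apply: contraT => na.
have d1 : d = 1 := ad_eq1_of_aa_neq1 ac0 Gh G0 na.
have nb : b != 0 by case: nf => -[] // _; rewrite d1 eqxx.
rewrite d1 in G0; have e1 := ad_eq1_of_aa_neq1 ac0 Gh Gh na.
by rewrite (aa_eq1_of_unipotent nb G0 Gh c0 e1) eqxx in na.
Qed.

End FreeSubgroup.

Definition conjugate_into_G2 (Gamma : Af -> Prop) := exists h hinv : Af,
  [/\ acomp h hinv = aid, acomp hinv h = aid &
      forall g, Gamma g -> in_G2 (acomp (acomp h g) hinv)].

Definition is_translation (g : Af) := [/\ aa g = 1, ab g = 0, ac g = 0 & ad g = 1].

Lemma conjugate_into_G2_id (Gamma : Af -> Prop) :
  (forall g, Gamma g -> in_G2 g) -> conjugate_into_G2 Gamma.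
Proof.
move=> sub; exists aid, aid; split; rewrite ?acomp1g // => g Gg.
by rewrite acomp1g acompg1; apply: sub.
Qed.

Section Conjugation.
Variables P Pi : Af.
Hypothesis PPi : acomp P Pi = aid.
Hypothesis PiP : acomp Pi P = aid.

Definition conj_set (Gamma : Af -> Prop) (g : Af) :=
  exists2 g', Gamma g' & g = acomp (acomp Pi g') P.

Lemma conjM g h :
  acomp (acomp (acomp Pi g) P) (acomp (acomp Pi h) P) = acomp (acomp Pi (acomp g h)) P.
Proof. by rewrite -!acompA (acompA P Pi) PPi acomp1g. Qed.

Lemma conj1 : acomp (acomp Pi aid) P = aid.
Proof. by rewrite acompg1 PiP. Qed.

Lemma conj_set_subgroup Gamma : is_Aff_subgroup Gamma -> is_Aff_subgroup (conj_set Gamma).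
Proof.
case=> _ G1 GM GV; have conj_inv g : Gamma g -> exists2 h, Gamma h &
    acomp (acomp (acomp Pi g) P) (acomp (acomp Pi h) P) = aid /\
    acomp (acomp (acomp Pi h) P) (acomp (acomp Pi g) P) = aid.
  by move=> Gg; have [h [Gh gh hg]] := GV g Gg; exists h; rewrite // !conjM gh hg conj1.
split.
- by move=> _ [g Gg ->]; have [h _ [gh hg]] := conj_inv g Gg; exists (acomp (acomp Pi h) P).
- by exists aid; rewrite ?conj1.
- by move=> _ _ [g Gg ->] [h Gh ->]; exists (acomp g h); rewrite ?conjM //; apply: GM.
- move=> _ [g Gg ->]; have [h Gh [gh hg]] := conj_inv g Gg.
  by exists (acomp (acomp Pi h) P); split=> //; exists h.
Qed.

Lemma conj_set_free Gamma : acts_freely Gamma -> acts_freely (conj_set Gamma).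
Proof.
move=> free _ [g Gg ->] p; rewrite !actM => E.
suff -> : g = aid by rewrite conj1.
by apply: (free g Gg (act P p)); rewrite -{2}E -(actM P Pi) PPi act1.
Qed.

Lemma conjugate_into_G2_conj_set Gamma :
  conjugate_into_G2 (conj_set Gamma) -> conjugate_into_G2 Gamma.
Proof.
case=> h [hi [hhi hih sub]]; exists (acomp h Pi), (acomp P hi); split.
- by rewrite -!acompA (acompA Pi P) PiP acomp1g.
- by rewrite -!acompA (acompA hi h) hih acomp1g.
- by move=> g Gg; have := sub _ (ex_intro2 _ _ g Gg erefl); rewrite -!acompA.
Qed.

Lemma conj_translation g : is_translation (acomp (acomp Pi g) P) -> is_translation g.
Proof.
suff conj_tr t : is_translation t -> is_translation (acomp (acomp P t) Pi).
  by move/conj_tr; rewrite -!acompA PPi acompg1 acompA PPi acomp1g.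
case: t => a b c d r s [/= -> -> -> ->]; set t := Aff 1 0 0 1 r s; rewrite /is_translation.
have [-> -> -> ->] : [/\ aa (acomp (acomp P t) Pi) = aa (acomp P Pi),
    ab (acomp (acomp P t) Pi) = ab (acomp P Pi), ac (acomp (acomp P t) Pi) = ac (acomp P Pi)
  & ad (acomp (acomp P t) Pi) = ad (acomp P Pi)] by split; rewrite !acompE /=; qring.
by rewrite PPi.
Qed.

Lemma conj_fixes_e1 g :
  aa g * aa P + ab g * ac P = aa P -> ac g * aa P + ad g * ac P = ac P ->
  aa (acomp (acomp Pi g) P) = 1 /\ ac (acomp (acomp Pi g) P) = 0.
Proof.
move=> Fa Fc; have [e1 e3] : aa (acomp Pi P) = 1 /\ ac (acomp Pi P) = 0 by rewrite PiP.
rewrite acompE /= in e1 e3; split.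
  have -> : aa (acomp (acomp Pi g) P) =
      aa Pi * (aa g * aa P + ab g * ac P) + ab Pi * (ac g * aa P + ad g * ac P).
    by rewrite !acompE /=; qring.
  by rewrite Fa Fc.
have -> : ac (acomp (acomp Pi g) P) =
    ac Pi * (aa g * aa P + ab g * ac P) + ad Pi * (ac g * aa P + ad g * ac P).
  by rewrite !acompE /=; qring.
by rewrite Fa Fc.
Qed.

End Conjugation.

Lemma conjugate_into_G2_of_fixes_e1 (Gamma : Af -> Prop) g0 :
  is_Aff_subgroup Gamma -> acts_freely Gamma -> Gamma g0 ->
  aa g0 = 1 -> ac g0 = 0 -> ~ is_translation g0 -> conjugate_into_G2 Gamma.
Proof.
move=> sub free; case: g0 => a b c d t1 t2 G0 /= a1 c0 ntr; subst a c.
have [d1|nd] := eqVneq d 1.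
  subst d; apply/conjugate_into_G2_id/(Gamma_in_G2 sub free G0); right; split=> //.
  by apply/eqP => b0; apply: ntr; split.
pose p := b / (d - 1); have bp : b = p * (d - 1) by rewrite mulrVK // qunitE subr_eq0.
clearbody p; set P := Aff 1 p 0 1 0 0; set Pi := Aff 1 (- p) 0 1 0 0.
have PPi : acomp P Pi = aid by rewrite acompE; congr Aff; qring.
have PiP : acomp Pi P = aid by rewrite acompE; congr Aff; qring.
apply: (conjugate_into_G2_conj_set PPi PiP); apply: conjugate_into_G2_id.
have G0' : conj_set P Pi Gamma (Aff 1 0 0 d (t1 - p * t2) t2).
  by exists (Aff 1 b 0 d t1 t2); rewrite // bp !acompE; congr Aff; qring.
exact: (Gamma_in_G2 (conj_set_subgroup PPi PiP sub) (conj_set_free PPi PiP free) G0' (or_introl _)).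
Qed.

Lemma first_column_conj (v1 v2 : H) : v1 != 0 \/ v2 != 0 ->
  exists P Pi, [/\ acomp P Pi = aid, acomp Pi P = aid, aa P = v1 & ac P = v2].
Proof.
have [-> [//|nv2] | nv1 _] := eqVneq v1 0.
  exists (Aff 0 1 v2 0 0 0), (Aff 0 v2^-1 1 0 0 0).
  by split; rewrite // acompE; congr Aff; rewrite ?(mul0r, mulr0, mul1r, mulr1, add0r, addr0)
     ?mulrV ?mulVr ?qunitE.
exists (Aff v1 0 v2 1 0 0), (Aff v1^-1 0 (- (v2 / v1)) 1 0 0).
by split; rewrite // acompE; congr Aff; rewrite ?(mul0r, mulr0, mul1r, mulr1, add0r, addr0)
   ?mulrV ?mulVr ?mulNr ?mulrVK ?qunitE ?subrr ?addNr.
Qed.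

Lemma conjugate_into_G2_of_fixed_vector (Gamma : Af -> Prop) g0 v1 v2 :
  is_Aff_subgroup Gamma -> acts_freely Gamma -> Gamma g0 -> ~ is_translation g0 ->
  v1 != 0 \/ v2 != 0 -> aa g0 * v1 + ab g0 * v2 = v1 -> ac g0 * v1 + ad g0 * v2 = v2 ->
  conjugate_into_G2 Gamma.
Proof.
move=> sub free G0 ntr nz F1 F2.
have [P [Pi [PPi PiP Pv1 Pv2]]] := first_column_conj nz.
rewrite -Pv1 -Pv2 in F1 F2; have [a1 c0] := conj_fixes_e1 PiP F1 F2.
apply: (conjugate_into_G2_conj_set PPi PiP).
apply: (conjugate_into_G2_of_fixes_e1 _ _ _ a1 c0).
- exact: conj_set_subgroup.
- exact: conj_set_free.
- by exists g0.
- by move/(conj_translation PPi).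
Qed.

End AffineMaps.

Theorem mainTheorem10 (R : realType) (Gamma : aff R -> Prop) :
  is_Aff_subgroup Gamma -> acts_freely Gamma ->
  exists h hinv : aff R,
    [/\ acomp h hinv = aid R, acomp hinv h = aid R &
        forall g, Gamma g -> in_G2 (acomp (acomp h g) hinv)].
Proof.
move=> sub free.
have [[g0 [G0 ntr]] | all_tr] := classic (exists g0, Gamma g0 /\ ~ is_translation g0).
  have [[x1 [x2 [nz [K1 K2]]]] | onto] :=
    mx2_ker_or_onto (@qunitE R) (aa g0 - 1) (ab g0) (ac g0) (ad g0 - 1).
    apply: (conjugate_into_G2_of_fixed_vector sub free G0 ntr nz); apply/eqP.
      by move/eqP: K1; rewrite mulrBl mul1r addrAC subr_eq0.
    by move/eqP: K2; rewrite mulrBl mul1r addrA subr_eq0.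
  by case: ntr; rewrite (free_onto_id free G0 onto).
apply: conjugate_into_G2_id => g Gg.
have [a1 _ c0 d1] : is_translation g by apply: NNPP => ntr; apply: all_tr; exists g.
by split=> //; rewrite d1; apply/eqP/oner_neq0.
Qed.
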